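(* Let $G$ be a graph and $v$ a vertex of $G$ of degree $d(v)$. Let $k$ and $C$ be positive integers with $k\geq d(v)+2$, and let $\alpha$ and $\beta$ be $k$-colourings of $G$. Suppose that there is a recolouring sequence from $\alpha_{\restriction (G-v)}$ to $\beta_{\restriction (G-v)}$ (in $G-v$) in which the vertices of the neighbourhood $N(v)$ are recoloured at most $C$ times in total. Then this sequence lifts to a recolouring sequence in $G$ from $\alpha$ to $\beta$ in which $v$ is recoloured at most $\lceil \frac{C}{k-d(v)-1}\rceil+1$ times.
   Context: All colourings are proper $k$-colourings (maps $V\to\{1,\dots,k\}$ with adjacent vertices receiving distinct colours). A recolouring sequence is a sequence of colourings in which consecutive colourings differ on exactly one vertex. For a subgraph $H$ of $G$ and a colouring $\sigma$ of $G$, $\sigma_{\restriction H}$ is the restriction of $\sigma$ to $H$. A recolouring sequence $s'$ of $H$ lifts to a recolouring sequence $s$ of $G$ if restricting the colourings of $s$ to $H$ (and deleting consecutive repetitions) yields $s'$, i.e. $s$ performs the recolourings of $s'$ in order, interleaved with recolourings of vertices outside $H$. *)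

From mathcomp Require Import all_boot.
Set Implicit Arguments. Unset Strict Implicit. Unset Printing Implicit Defensive.

Section Recolouring.
Variables (V : finType) (e : rel V) (k : nat).

Definition sgraph := symmetric e /\ irreflexive e.

Definition degree (v : V) : nat := #|[set x | e v x]|.

Definition proper_col (c : {ffun V -> 'I_k}) : bool :=
  [forall x, forall y, e x y ==> (c x != c y)].

Definition differ_one (c c' : {ffun V -> 'I_k}) : bool :=
  #|[set x | c x != c' x]| == 1.

Definition recol_seq (a b : {ffun V -> 'I_k}) (s : seq {ffun V -> 'I_k}) : bool :=
  [&& all proper_col (a :: s), path differ_one a s & last a s == b].

Definition recol_count (A : {set V}) (a : {ffun V -> 'I_k})
    (s : seq {ffun V -> 'I_k}) : nat :=
  sumn (pairmap (fun c c' : {ffun V -> 'I_k} => #|[set x in A | c x != c' x]|) a s).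

End Recolouring.

Fixpoint rem_rep (A : eqType) (s : seq A) : seq A :=
  match s with
  | x :: ((y :: _) as s') => if x == y then rem_rep s' else x :: rem_rep s'
  | _ => s
  end.

Definition del_vertex (V : finType) (v : V) := {x : V | x != v}.
Definition del_rel (V : finType) (e : rel V) (v : V) : rel (del_vertex v) :=
  fun x y => e (val x) (val y).

Definition restr (V : finType) (v : V) (k : nat) (c : {ffun V -> 'I_k})
  : {ffun del_vertex v -> 'I_k} := [ffun x => c (val x)].

Definition lifts (V : finType) (v : V) (k : nat)
    (a : {ffun V -> 'I_k}) (s : seq {ffun V -> 'I_k})
    (a' : {ffun del_vertex v -> 'I_k}) (s' : seq {ffun del_vertex v -> 'I_k}) :=
  rem_rep (map (@restr V v k) (a :: s)) = a' :: s'.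
Arguments del_rel {V} e v _ _.
Arguments lifts {V} v {k} a s a' s'.

From mathcomp Require Import all_boot zify.
Set Implicit Arguments. Unset Strict Implicit. Unset Printing Implicit Defensive.

(* Lift the sequence step by step, keeping the colour of [v] whenever possible.
   When a neighbour of [v] is about to take the colour of [v], first move [v] to a
   colour used neither by [v] nor on N(v); there are at least
   m = k - d(v) - 1 of them, and we pick the one that the future recolourings of
   N(v) reach last.  Each recolouring takes at most one colour, so the chosen
   colour outlasts at least m - 1 further recolourings of N(v): consecutive moves
   of [v] are separated by at least m recolourings of N(v), and one extra move
   may be needed at the end to reach the target colour of [v]. *)

Section Steps.
Variables (V : finType) (k : nat).
Implicit Types (A : {set V}) (c : 'I_k) (a b x y : {ffun V -> 'I_k}).

Definition nrecol A x y : nat := #|[set u in A | x u != y u]|.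

Definition recol_to A c x y : bool := [exists u in A, (x u != y u) && (y u == c)].

Lemma recol_count_cons A a b s :
  recol_count A a (b :: s) = nrecol A a b + recol_count A b s.
Proof. by []. Qed.

Lemma recol_seq_cons (e : rel V) a b x s :
  recol_seq e a b (x :: s) = [&& proper_col e a, differ_one a x & recol_seq e x b s].
Proof. by rewrite /recol_seq /= -!andbA; do !bool_congr. Qed.

Lemma differ_one_neq x y : differ_one x y -> x != y.
Proof.
apply: contraL => /eqP ->; rewrite /differ_one.
suff -> : [set u | y u != y u] = set0 by rewrite cards0.
by apply/setP => u; rewrite !inE eqxx.
Qed.

Lemma nrecol_le1 A x y : differ_one x y -> nrecol A x y <= 1.
Proof.
move=> /eqP <-; apply: subset_leq_card; apply/subsetP => u.
by rewrite !inE => /andP [].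
Qed.

Lemma recol_to_nrecol A c x y : recol_to A c x y -> 0 < nrecol A x y.
Proof.
case/exists_inP => u uA /andP [xyu _]; rewrite card_gt0.
by apply/set0Pn; exists u; rewrite inE uA.
Qed.

Lemma card_recol_to A x y : #|[set c | recol_to A c x y]| <= nrecol A x y.
Proof.
have -> : [set c | recol_to A c x y] = y @: [set u in A | x u != y u].
  apply/setP => c; rewrite inE; apply/exists_inP/imsetP.
    by case=> u uA /andP [xyu /eqP <-]; exists u; rewrite // inE uA.
  by case=> u; rewrite inE => /andP [uA xyu] ->; exists u; rewrite ?xyu ?eqxx.
exact: leq_imset_card.
Qed.

Lemma recol_to_inj A c c' x y :
  differ_one x y -> recol_to A c x y -> recol_to A c' x y -> c = c'.
Proof.
move=> /cards1P [w dxy].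
have at_w u : x u != y u -> u = w by move=> xyu; apply/set1P; rewrite -dxy inE.
case/exists_inP => u _ /andP [/at_w -> /eqP <-].
by case/exists_inP => u' _ /andP [/at_w -> /eqP <-].
Qed.

Lemma avoid_recol_to A c x y :
  {in A, forall u, x u != c} -> ~~ recol_to A c x y -> {in A, forall u, y u != c}.
Proof.
move=> xc /exists_inPn ny u uA; have [<- | xyu] := eqVneq (x u) (y u); first exact: xc.
by move: (ny u uA); rewrite xyu.
Qed.

End Steps.

Section Lookahead.
Variables (V : finType) (A : {set V}) (k m : nat).
Local Notation col := {ffun V -> 'I_k}.

(* The credit [m.-1] for a colour that is never taken is the most that
   [exists_late_colour] asks of any colour. *)
Fixpoint lifetime (c : 'I_k) (x : col) (s : seq col) : nat :=
  if s is y :: s' then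
    if recol_to A c x y then 0 else nrecol A x y + lifetime c y s'
  else m.-1.

Lemma exists_late_colour (x : col) s : path (@differ_one V k) x s ->
  forall S : {set 'I_k}, 0 < #|S| ->
  exists2 c, c \in S & minn #|S| m <= (lifetime c x s).+1.
Proof.
elim: s x => [|y s IH] x /=.
  by move=> _ S /card_gt0P [c cS]; exists c => //; lia.
case/andP => dxy /IH {}IH S S_gt0.
pose T := [set c | recol_to A c x y].
have le1 := nrecol_le1 A dxy.
have leS : #|S| <= #|S :\: T| + nrecol A x y.
  rewrite -(cardsID T S) addnC leq_add2l.
  exact: leq_trans (subset_leq_card (subsetIr _ _)) (card_recol_to A x y).
have [ST0 | ST_gt0] := posnP #|S :\: T|.
  case/card_gt0P: S_gt0 => c cS; exists c => //.
  by rewrite geq_min (leq_trans leS) // ST0 (leq_trans le1).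
have [c] := IH _ ST_gt0; rewrite in_setD inE => /andP [/negbTE cT cS] late.
exists c; rewrite //= cT.
apply: leq_trans (_ : minn (#|S :\: T| + nrecol A x y) m <= _); last by lia.
by rewrite leq_min geq_minr (leq_trans (geq_minl _ _) leS).
Qed.

End Lookahead.

Section Extension.
Variables (V : finType) (e : rel V) (v : V) (k : nat).
Local Notation W := (del_vertex v).
Implicit Types (c : 'I_k) (a : {ffun V -> 'I_k}) (x y : {ffun W -> 'I_k}).

Definition ext_col x c : {ffun V -> 'I_k} :=
  [ffun p => if insub p is Some u then x u else c].

Definition nbhd : {set W} := [set u | e v (val u)].

Lemma ext_col_v x c : ext_col x c v = c.
Proof. by rewrite ffunE insubN // negbK. Qed.

Lemma ext_col_val x c (u : W) : ext_col x c (val u) = x u.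
Proof. by rewrite ffunE valK. Qed.

Lemma restr_ext_col x c : restr v (ext_col x c) = x.
Proof. by apply/ffunP => u; rewrite ffunE ext_col_val. Qed.

Lemma ext_col_restr a : ext_col (restr v a) (a v) = a.
Proof.
apply/ffunP => p; have [-> | pv] := eqVneq p v; first by rewrite ext_col_v.
by rewrite -[p]/(val (Sub p pv : W)) ext_col_val ffunE.
Qed.

Lemma card_diff_ext_col x y c c' :
  #|[set p | ext_col x c p != ext_col y c' p]| = (c != c') + #|[set u | x u != y u]|.
Proof.
rewrite (cardsD1 v) inE !ext_col_v; congr (_ + _).
rewrite -(card_imset _ val_inj); apply: eq_card => p; rewrite !inE.
have [-> | pv] := eqVneq p v.
  by apply/esym/imsetP => -[u _ /eqP]; apply/negP; rewrite eq_sym (valP u).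
by rewrite -[p]/(val (Sub p pv : W)) mem_imset ?inE ?ext_col_val //; exact: val_inj.
Qed.

Lemma nrecol_v x y c c' : nrecol [set v] (ext_col x c) (ext_col y c') = (c != c').
Proof.
rewrite /nrecol.
suff -> : [set p in [set v] | ext_col x c p != ext_col y c' p] =
          if c != c' then [set v] else set0.
  by case: (c != c'); rewrite ?cards1 ?cards0.
apply/setP => p; rewrite !inE; have [-> | pv] := eqVneq p v.
  by rewrite !ext_col_v; case: (c != c'); rewrite ?inE ?eqxx.
by case: (c != c'); rewrite ?inE ?(negbTE pv).
Qed.

Lemma card_nbhd : #|nbhd| <= degree e v.
Proof.
rewrite -(card_imset _ val_inj); apply: subset_leq_card.
by apply/subsetP => p /imsetP [u]; rewrite !inE => evu ->.
Qed.

Lemma card_free_colours x c :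
  k - degree e v - 1 <= #|[set c' | (c' != c) && [forall u in nbhd, x u != c']]|.
Proof.
set S := [set c' | _].
have sub : ~: S \subset c |: (x @: nbhd).
  apply/subsetP => c'; rewrite !inE negb_and negbK => /orP [-> // | ].
  by case/forall_inPn => u uA /negbNE/eqP <-; rewrite imset_f ?orbT.
have le_compl : #|~: S| <= (degree e v).+1.
  apply: leq_trans (subset_leq_card sub) _; rewrite cardsU1 -add1n leq_add ?leq_b1 //.
  exact: leq_trans (leq_imset_card _ _) card_nbhd.
have := cardsC S; rewrite card_ord; lia.
Qed.

Lemma differ_one_ext_col x y c c' :
  differ_one (ext_col x c) (ext_col y c') = if c == c' then differ_one x y else x == y.
Proof.
rewrite /differ_one card_diff_ext_col; have [_ | cc'] := eqVneq c c'; first by [].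
rewrite add1n eqSS cards_eq0; apply/eqP/eqP => [xy | ->].
  by apply/ffunP => u; apply/eqP/negP => /negP xyu; move/setP/(_ u): xy; rewrite !inE xyu.
by apply/setP => u; rewrite !inE eqxx.
Qed.

Lemma proper_restr a : proper_col e a -> proper_col (del_rel e v) (restr v a).
Proof.
move=> /forallP pa; apply/forallP => u; apply/forallP => w; apply/implyP => euw.
by rewrite !ffunE; move/forallP/(_ (val w))/implyP: (pa (val u)); apply.
Qed.

Lemma proper_ext_colP x c : sgraph e ->
  proper_col e (ext_col x c) <-> proper_col (del_rel e v) x /\ {in nbhd, forall u, x u != c}.
Proof.
case=> esym eirr; split.
  move=> pxc; split; first by rewrite -(restr_ext_col x c); exact: proper_restr.
  move=> u; rewrite inE => evu; rewrite eq_sym -{1}(ext_col_v x c) -(ext_col_val x c u).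
  by move/forallP/(_ v)/forallP/(_ (val u))/implyP: pxc; apply.
case=> /forallP px xc; apply/forallP => p; apply/forallP => q; apply/implyP => epq.
rewrite !ffunE; case: insubP => [u _ pu | /negbNE/eqP pv]; case: insubP => [w _ qw | /negbNE/eqP qv].
- by move/forallP/(_ w)/implyP: (px u); apply; rewrite /del_rel pu qw.
- by apply: xc; rewrite inE pu esym -qv.
- by rewrite eq_sym; apply: xc; rewrite inE qw -pv.
- by move: epq; rewrite pv qv eirr.
Qed.

End Extension.

Section Lifting.
Variables (V : finType) (e : rel V) (v : V) (k m : nat) (beta : {ffun V -> 'I_k}).
Hypotheses (sg : sgraph e) (proper_beta : proper_col e beta).
Hypotheses (m_gt0 : 0 < m) (m_free : m <= k - degree e v - 1).
Local Notation W := (del_vertex v).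
Local Notation colW := {ffun W -> 'I_k}.
Local Notation N := (nbhd e v).

Lemma exists_fresh_colour (x y : colW) c s :
  proper_col e (ext_col x c) -> proper_col (del_rel e v) y -> differ_one x y ->
  recol_to N c x y -> path (@differ_one _ k) y s ->
  exists c', [/\ c' != c, proper_col e (ext_col x c'), proper_col e (ext_col y c')
               & m <= (lifetime N m c' y s).+1].
Proof.
move=> /(proper_ext_colP _ _ sg) [px xc] py dxy conf pys.
set S := [set c' | (c' != c) && [forall u in N, x u != c']].
have mS : m <= #|S| := leq_trans m_free (card_free_colours e x c).
have [c'] := exists_late_colour N m pys (leq_trans m_gt0 mS).
rewrite inE => /andP [c'c /forall_inP xc'] late.
have yc' : {in N, forall u, y u != c'}.
  apply: avoid_recol_to xc' _; apply: contra c'c => conf'.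
  by rewrite (recol_to_inj dxy conf' conf).
exists c'; split => //; try by apply/(proper_ext_colP _ _ sg).
by apply: leq_trans late; rewrite leq_min mS leqnn.
Qed.

(* Each move of [v] is paid for by [m] recolourings of N(v); the slack
   [2 * m - 1] covers the first move and the final one to [beta v]. *)
Lemma lift_recol_seq (s' : seq colW) x c :
  proper_col e (ext_col x c) -> recol_seq (del_rel e v) x (restr v beta) s' ->
  exists s, [/\ recol_seq e (ext_col x c) beta s, lifts v (ext_col x c) s x s' &
    recol_count [set v] (ext_col x c) s * m + lifetime N m c x s'
      <= recol_count N x s' + 2 * m - 1].
Proof.
elim: s' x c => [|y s' IH] x c pxc.
  case/and3P => /= _ _ /eqP xb; subst x.
  have [-> | cb] := eqVneq c (beta v).
    exists [::]; rewrite ext_col_restr /recol_seq /= proper_beta eqxx.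
    by split => //; rewrite /recol_count /=; lia.
  exists [:: beta]; split.
  - rewrite recol_seq_cons pxc /recol_seq /= proper_beta eqxx /=.
    by rewrite -{2}(ext_col_restr v beta) differ_one_ext_col (negbTE cb) eqxx.
  - by rewrite /lifts /= restr_ext_col eqxx.
  - rewrite recol_count_cons -{2}(ext_col_restr v beta) nrecol_v cb /recol_count /=; lia.
rewrite recol_seq_cons => /and3P [_ dxy rs].
have [/andP [py _] pys _] := and3P rs.
have xy := differ_one_neq dxy.
have [conf | free] := boolP (recol_to N c x y).
  have [c' [c'c pxc' pyc' late]] := exists_fresh_colour pxc py dxy conf pys.
  have [s [rs_lift lifts_s bound]] := IH y c' pyc' rs.
  exists [:: ext_col x c', ext_col y c' & s]; split.
  - by rewrite !recol_seq_cons pxc pxc' rs_lift !differ_one_ext_col (eq_sym c) (negbTE c'c) !eqxx dxy.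
  - by move: lifts_s; rewrite /lifts /= !restr_ext_col eqxx (negbTE xy) => ->.
  - rewrite !recol_count_cons !nrecol_v eqxx (eq_sym c) c'c /= conf.
    have := recol_to_nrecol conf; nia.
have pyc : proper_col e (ext_col y c).
  case/(proper_ext_colP _ _ sg): pxc => _ xc.
  by apply/(proper_ext_colP _ _ sg); split; last exact: avoid_recol_to free.
have [s [rs_lift lifts_s bound]] := IH y c pyc rs.
exists (ext_col y c :: s); split.
- by rewrite recol_seq_cons pxc rs_lift differ_one_ext_col eqxx dxy.
- by move: lifts_s; rewrite /lifts /= !restr_ext_col (negbTE xy) => ->.
- by rewrite !recol_count_cons nrecol_v eqxx /= (negbTE free); nia.
Qed.

End Lifting.

Unset Implicit Arguments.

Theorem lemma1 (V : finType) (e : rel V) (v : V) (k C : nat)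
  (alpha beta : {ffun V -> 'I_k}) (s' : seq {ffun del_vertex v -> 'I_k}) :
  sgraph e ->
  0 < k -> 0 < C ->
  degree e v + 2 <= k ->
  proper_col e alpha -> proper_col e beta ->
  recol_seq (del_rel e v) (restr v alpha) (restr v beta) s' ->
  recol_count [set x : del_vertex v | e v (val x)] (restr v alpha) s' <= C ->
  exists s : seq {ffun V -> 'I_k},
    [/\ recol_seq e alpha beta s,
        lifts v alpha s (restr v alpha) s' &
        recol_count [set v] alpha s
          <= (C + (k - degree e v - 1).-1) %/ (k - degree e v - 1) + 1].
Proof.
move=> sg _ _ deg_k p_alpha p_beta rs N_le_C.
set m := k - degree e v - 1.
have m_gt0 : 0 < m by rewrite /m; lia.
rewrite -(ext_col_restr v alpha) in p_alpha.
have [s [rs_lift lifts_s bound]] := lift_recol_seq sg p_beta m_gt0 (leqnn m) p_alpha rs.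
rewrite ext_col_restr in rs_lift lifts_s bound.
exists s; split => //; clearbody m.
have : recol_count [set v] alpha s * m <= C + 2 * m - 1.
  have N_le_C' : recol_count (nbhd e v) (restr v alpha) s' <= C := N_le_C.
  lia.
case: (recol_count _ _ _) => // n; rewrite addn1 ltnS leq_divRL //; nia.
Qed.
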